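(* Let $\mathcal{M}$ and $\mathcal{N}$ be matroids on the same finite ground set $V$, and let $k\ge1$ be an integer. If $k\le\nu(\mathcal{M},\mathcal{N})-1$, then $\mathbf{RG}(\mathcal{M},\mathcal{N};k)$ is connected.
   Context: $\nu(\mathcal{M},\mathcal{N})$ is the maximum size of a set independent in both $\mathcal{M}$ and $\mathcal{N}$. $\mathbf{RG}(\mathcal{M},\mathcal{N};k)$ is the graph whose vertices are the common independent sets of $\mathcal{M}$ and $\mathcal{N}$ of cardinality $k$, two such sets $S,T$ being adjacent if $S\cup T$ is an independent set of $\mathcal{M}$ of cardinality $k+1$. *)

From mathcomp Require Import all_boot.
Set Implicit Arguments. Unset Strict Implicit. Unset Printing Implicit Defensive.

Record matroid (V : finType) := Matroid {
  indep : pred {set V};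
  indep_set0 : indep set0;
  indep_subset : forall A B : {set V}, B \subset A -> indep A -> indep B;
  indep_augment : forall A B : {set V}, indep A -> indep B -> #|A| < #|B| ->
    exists2 x, x \in B :\: A & indep (x |: A)
}.

Definition common_indep (V : finType) (M N : matroid V) (S : {set V}) : bool :=
  indep M S && indep N S.

Definition nu (V : finType) (M N : matroid V) : nat :=
  \max_(S : {set V} | common_indep M N S) #|S|.

Definition RG_vertex (V : finType) (M N : matroid V) (k : nat) (S : {set V}) : bool :=
  common_indep M N S && (#|S| == k).

Definition RG_adj (V : finType) (M N : matroid V) (k : nat) : rel {set V} :=
  fun S T => [&& RG_vertex M N k S, RG_vertex M N k T,
                 indep M (S :|: T) & #|S :|: T| == k.+1].

Definition RG_connected (V : finType) (M N : matroid V) (k : nat) : Prop :=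
  forall S T : {set V}, RG_vertex M N k S -> RG_vertex M N k T ->
    connect (RG_adj M N k) S T.

From mathcomp Require Import all_boot.

Set Implicit Arguments.
Unset Strict Implicit.
Unset Printing Implicit Defensive.

(* Fix a common independent set J with #|J| = k + 1.  From any vertex S not
   contained in J, augment S in M by some x of J; then extend (S :&: J) + x
   inside N using the elements of S back to size k.  The result is a
   neighbour of S (it lies in S + x, which is M-independent) meeting J in
   more elements, so every vertex is joined to a k-subset of J.  Two distinct
   k-subsets of J have union J, hence are adjacent. *)

Lemma indep_extend (V : finType) (M : matroid V) (A B : {set V}) (n : nat) :
  indep M A -> indep M B -> #|A| <= n <= #|B| ->
  exists A', [/\ indep M A', A \subset A', A' \subset A :|: B & #|A'| = n].
Proof.
move=> iA iB; elim: n => [|n IH] /andP[leAn lenB].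
  by exists A; rewrite subsetUl; split=> //; apply/eqP; rewrite -leqn0.
have [eqAn | ltAn] := eqVneq #|A| n.+1; first by exists A; rewrite subsetUl.
have [A' [iA' sAA' sA'AB cardA']] : exists A', [/\ indep M A', A \subset A',
    A' \subset A :|: B & #|A'| = n].
  by apply: IH; rewrite -ltnS ltn_neqAle ltAn leAn ltnW.
have ltA'B : #|A'| < #|B| by rewrite cardA'.
have [x /setDP[xB xA'] ixA'] := indep_augment iA' iB ltA'B.
exists (x |: A'); split=> //.
- exact: subset_trans sAA' (subsetUr _ _).
- by rewrite subUset sub1set in_setU xB orbT sA'AB.
- by rewrite cardsU1 xA' cardA'.
Qed.

Lemma exists_subset_card (T : finType) (B : {set T}) (n : nat) :
  n <= #|B| -> exists2 A : {set T}, A \subset B & #|A| = n.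
Proof.
rewrite -bin_gt0 -cards_draws => /card_gt0P[A].
by rewrite inE => /andP[sAB /eqP cardA]; exists A.
Qed.

Lemma common_indep_subset (V : finType) (M N : matroid V) (A B : {set V}) :
  B \subset A -> common_indep M N A -> common_indep M N B.
Proof.
by move=> sBA /andP[iMA iNA]; rewrite /common_indep !(indep_subset sBA).
Qed.

Lemma exists_common_indep_card (V : finType) (M N : matroid V) (n : nat) :
  n <= nu M N -> exists2 J, common_indep M N J & #|J| = n.
Proof.
have [J0 cJ0 ->] : {J0 | J0 \in common_indep M N & nu M N = #|J0|}.
  apply: eq_bigmax_cond; apply/card_gt0P; exists set0.
  by rewrite unfold_in /common_indep !indep_set0.
case/exists_subset_card=> J sJJ0 cardJ; exists J => //.
exact: common_indep_subset cJ0.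
Qed.

Section ReconfigurationGraph.

Variables (V : finType) (M N : matroid V) (k : nat).

Notation vertex := (RG_vertex M N k).
Notation adj := (RG_adj M N k).

Lemma RG_adj_sym : symmetric adj.
Proof.
by move=> S T; rewrite /RG_adj setUC; case: (vertex S); case: (vertex T).
Qed.

Lemma RG_adj_subsets (J P Q : {set V}) :
  indep M J -> #|J| = k.+1 -> vertex P -> vertex Q -> P \subset J -> Q \subset J ->
  P != Q -> adj P Q.
Proof.
move=> iMJ cardJ vP vQ sPJ sQJ neqPQ.
case/andP: (vP) (vQ) => _ /eqP cardP /andP[_ /eqP cardQ].
have eqPQJ : P :|: Q = J.
  apply/eqP; rewrite eqEcard subUset sPJ sQJ cardJ ltnNge /=.
  apply: contra neqPQ => leUk.
  have /eqP {1}<- : P :|: Q == P by rewrite eq_sym eqEcard subsetUl cardP.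
  by rewrite eq_sym eqEcard subsetUr cardQ.
by rewrite /RG_adj vP vQ eqPQJ iMJ cardJ eqxx.
Qed.

Variable J : {set V}.
Hypothesis cJ : common_indep M N J.

Lemma exists_RG_adj_meet_gt (S : {set V}) :
  k < #|J| -> vertex S -> ~~ (S \subset J) ->
  exists2 T, adj S T & #|S :&: J| < #|T :&: J|.
Proof.
case/andP: cJ => iMJ iNJ ltkJ vS nsSJ; case/andP: (vS) => /andP[iMS iNS] /eqP cardS.
have ltSJ : #|S| < #|J| by rewrite cardS.
have [x /setDP[xJ xS] iMxS] := indep_augment iMS iMJ ltSJ.
have ltSJk : #|S :&: J| < k.
  rewrite -cardS proper_card // properEneq subsetIl andbT.
  by apply: contra nsSJ => /eqP/setIidPl.
have xSJ : x \notin S :&: J by rewrite in_setI (negbTE xS).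
have iNA : indep N (x |: (S :&: J)).
  by apply: indep_subset iNJ; rewrite subUset sub1set xJ subsetIr.
have cardA : #|x |: (S :&: J)| <= k <= #|S| by rewrite cardsU1 xSJ cardS leqnn andbT.
have [T [iNT sAT sTAS cardT]] := indep_extend iNA iNS cardA.
have sTxS : T \subset x |: S.
  apply: subset_trans sTAS _; rewrite subUset setUSS ?subsetIl //.
  by rewrite subsetUr.
have xT : x \in T by apply: (subsetP sAT); apply: setU11.
have eqST : S :|: T = x |: S.
  apply/eqP; rewrite eqEsubset subUset subsetUr sTxS /=.
  by rewrite subUset sub1set in_setU xT orbT subsetUl.
exists T.
  rewrite /RG_adj vS /RG_vertex /common_indep iNT (indep_subset sTxS iMxS).
  by rewrite cardT eqST iMxS cardsU1 xS cardS !eqxx.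
have sATJ : x |: (S :&: J) \subset T :&: J.
  by rewrite subsetI sAT subUset sub1set xJ subsetIr.
by have := subset_leq_card sATJ; rewrite cardsU1 xSJ.
Qed.

Lemma RG_connect_subset (S : {set V}) :
  k < #|J| -> vertex S -> exists2 P, connect adj S P & vertex P && (P \subset J).
Proof.
move=> ltkJ; have [n] := ubnP (k - #|S :&: J|); elim: n S => // n IH S ltSn vS.
have [sSJ | nsSJ] := boolP (S \subset J); first by exists S; rewrite ?vS.
have [T adjST ltST] := exists_RG_adj_meet_gt ltkJ vS nsSJ.
have vT : vertex T by case/and4P: adjST.
have ltSJk : #|S :&: J| < k.
  apply: (leq_trans ltST); case/andP: vT => _ /eqP <-.
  by rewrite subset_leq_card ?subsetIl.
have [|P connTP vP] := IH T _ vT.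
  by rewrite -ltnS (leq_trans _ ltSn) // ltnS ltn_sub2l.
by exists P => //; apply: connect_trans (connect1 adjST) connTP.
Qed.

End ReconfigurationGraph.

Theorem corollary5p4 (V : finType) (M N : matroid V) (k : nat) :
  1 <= k -> k <= nu M N - 1 -> RG_connected M N k.
Proof.
move=> k_gt0 le_k_nu S T vS vT.
have [J cJ cardJ] : exists2 J, common_indep M N J & #|J| = k.+1.
  (* [1 <= k] rules out [nu M N = 0], where the truncated [nu M N - 1] is 0. *)
  apply: exists_common_indep_card; rewrite -add1n -leq_subRL //.
  exact: leq_trans k_gt0 (leq_trans le_k_nu (leq_subr _ _)).
have ltkJ : k < #|J| by rewrite cardJ.
have [P connSP /andP[vP sPJ]] := RG_connect_subset cJ ltkJ vS.
have [Q connTQ /andP[vQ sQJ]] := RG_connect_subset cJ ltkJ vT.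
rewrite (sym_connect_sym (@RG_adj_sym _ M N k)) in connTQ.
apply: connect_trans connSP (connect_trans _ connTQ).
have [-> // | neqPQ] := eqVneq P Q.
have iMJ : indep M J by case/andP: cJ.
exact/connect1/(RG_adj_subsets iMJ cardJ vP vQ sPJ sQJ neqPQ).
Qed.
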